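(* Let $\mathcal{P}_1=\{f\in\mathcal{P}:\sum_{k=1}^n|\hat{f}_k|\le 1\}$. Then $\mathcal{P}_1$ is convex and compact, its extreme points are exactly $\mathbb{0},u_1,\dots,u_n$ (where $\mathbb{0}$ is the zero signal), and $$\mathcal{P}_1=\mathrm{conv}\{\mathbb{0},u_1,\dots,u_n\}.$$
   Context: Let $G$ be a graph with vertices $v_1,\dots,v_n$, symmetric non-negative weighted adjacency matrix $\mathbf{A}$, degree matrix $\mathbf{D}=\mathrm{diag}(\sum_k\mathbf{A}_{ik})$ (positive), and normalized Laplacian $\mathbf{L}=\mathbf{I}_n-\mathbf{D}^{-1/2}\mathbf{A}\mathbf{D}^{-1/2}$. Signals are vectors in $\mathcal{L}(G)\cong\mathbb{R}^n$ with standard basis $e_1,\dots,e_n$. Fix an orthonormal eigendecomposition $\mathbf{L}=\mathbf{U}\,\mathrm{diag}(\lambda_1,\dots,\lambda_n)\mathbf{U}^\intercal$ with columns $u_1,\dots,u_n$. Fourier transform $\hat{x}=\mathbf{U}^\intercal x$; convolution operator $\mathbf{C}_x=\mathbf{U}\,\mathrm{diag}(\hat{x})\mathbf{U}^\intercal$. For $f\in\mathcal{L}(G)$ let $(\mathbf{K}_f)_{ij}=(\mathbf{C}_{e_j}f)(v_i)$; $f$ is positive semi-definite if $\mathbf{K}_f$ is symmetric positive semi-definite. $\mathcal{P}$ denotes the set of positive semi-definite functions. *)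

From HB Require Import structures.
From mathcomp Require Import all_boot all_order all_algebra.
From mathcomp Require Import all_classical all_reals all_analysis.
Set Implicit Arguments. Unset Strict Implicit. Unset Printing Implicit Defensive.
Import Order.TTheory GRing.Theory Num.Theory.
Local Open Scope classical_set_scope.
Local Open Scope ring_scope.

Definition degmx (R : realType) (n : nat) (A : 'M[R]_n) : 'M[R]_n :=
  \matrix_(i, j) ((i == j)%:R * \sum_k A i k).

Definition degmx_isqrt (R : realType) (n : nat) (A : 'M[R]_n) : 'M[R]_n :=
  \matrix_(i, j) ((i == j)%:R * (Num.sqrt (\sum_k A i k))^-1).

Definition normLap (R : realType) (n : nat) (A : 'M[R]_n) : 'M[R]_n :=
  1%:M - degmx_isqrt A *m A *m degmx_isqrt A.

Definition gft (R : realType) (n : nat) (U : 'M[R]_n) (x : 'cV[R]_n) : 'cV[R]_n :=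
  U^T *m x.

Definition convop (R : realType) (n : nat) (U : 'M[R]_n) (x : 'cV[R]_n) : 'M[R]_n :=
  U *m diag_mx (gft U x)^T *m U^T.

Definition ebasis (R : realType) (n : nat) (j : 'I_n) : 'cV[R]_n := delta_mx j 0.

Definition Kmx (R : realType) (n : nat) (U : 'M[R]_n) (f : 'cV[R]_n) : 'M[R]_n :=
  \matrix_(i, j) (convop U (ebasis R j) *m f) i 0.

Definition psd_mx (R : realType) (n : nat) (M : 'M[R]_n) : Prop :=
  M^T = M /\ forall v : 'cV[R]_n, 0 <= (v^T *m M *m v) 0 0.

Definition psd_funs (R : realType) (n : nat) (U : 'M[R]_n) : set 'cV[R]_n :=
  [set f | psd_mx (Kmx U f)].

Definition psd_funs1 (R : realType) (n : nat) (U : 'M[R]_n) : set 'cV[R]_n :=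
  [set f | psd_funs U f /\ \sum_k `|gft U f k 0| <= 1].

Definition extreme_point (R : realType) (V : lmodType R) (S : set V) (x : V) : Prop :=
  S x /\ forall (y z : V) (t : R), S y -> S z -> 0 < t -> t < 1 ->
    x = t *: y + (1 - t) *: z -> y = z.

Definition conv_hull (R : realType) (V : lmodType R) (S : set V) : set V :=
  [set x | exists (m : nat) (w : 'I_m -> R) (p : 'I_m -> V),
     (forall i, 0 <= w i) /\ \sum_i w i = 1 /\ (forall i, S (p i)) /\
     x = \sum_i w i *: p i].

From HB Require Import structures.
From mathcomp Require Import all_boot all_order all_algebra.
From mathcomp Require Import all_classical all_reals all_analysis.
From mathcomp Require Import lra.
Set Implicit Arguments.
Unset Strict Implicit.
Unset Printing Implicit Defensive.
Import Order.TTheory GRing.Theory Num.Theory numFieldNormedType.Exports.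
Local Open Scope classical_set_scope.
Local Open Scope ring_scope.
Local Open Scope convex_scope.

(* Since K_f = U diag(f^) U^T, a signal f is positive semi-definite iff all
   its Fourier coefficients are nonnegative.  Hence P_1 is the image of the
   corner simplex {a | a >= 0, sum_k a_k <= 1} under the injective, linear and
   continuous map a |-> U a, which sends the vertices 0 and e_k of the simplex
   to 0 and u_k.  Convexity, compactness, extreme points and convex hulls are
   all transported by such a map, so it suffices to know them for the simplex. *)

Section linear_image.
Variables (R : realType) (V W : lmodType R) (f : {linear V -> W}).

Lemma convex_set_image (S : set V) :
  convex_set (S : set (convex_lmodType V)) ->
  convex_set (f @` S : set (convex_lmodType W)).
Proof.
move=> cS _ _ l /set_mem[a Sa <-] /set_mem[b Sb <-]; apply/mem_set.
exists ((a : convex_lmodType V) <| l |> b).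
  by apply/set_mem/cS; apply/mem_set.
by rewrite linearD !linearZ.
Qed.

Lemma extreme_point_image (S : set V) : injective f ->
  extreme_point (f @` S) = f @` extreme_point S.
Proof.
move=> finj; apply/seteqP; split => [_ [[x Sx <-] ext] | _ [x [Sx ext] <-]].
  exists x => //; split => // y z t Sy Sz t0 t1 xE.
  apply: finj; apply: ext t0 t1 _; [exact: imageP.. |].
  by rewrite xE linearD !linearZ.
split; first exact: imageP.
move=> _ _ t [y Sy <-] [z Sz <-] t0 t1 fxE.
suff -> : y = z by [].
apply: ext t0 t1 _ => //.
by apply: finj; rewrite fxE linearD !linearZ.
Qed.

Lemma conv_hull_image (S : set V) : conv_hull (f @` S) = f @` conv_hull S.
Proof.
apply/seteqP; split => [_ [m [w [p [w0 [w1 [Sp ->]]]]]] |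
                        _ [x [m [w [p [w0 [w1 [Sp ->]]]]]] <-]].
  have /choice[q qE] : forall i, exists x, S x /\ f x = p i.
    by move=> i; have [x Sx fx] := Sp i; exists x.
  exists (\sum_i w i *: q i).
    by exists m, w, q; do 3!split => //; move=> i; case: (qE i).
  by rewrite linear_sum; apply: eq_bigr => i _; rewrite linearZ (qE i).2.
exists m, w, (f \o p); do 3!split => //; first exact: (fun i => imageP f (Sp i)).
by rewrite linear_sum; apply: eq_bigr => i _; rewrite linearZ.
Qed.

End linear_image.

Section matrix_topology.
Variable K : numFieldType.

Lemma continuous_mx (T : topologicalType) m n (f : T -> 'M[K]_(m, n)) :
  (forall i j, continuous (fun x => f x i j)) -> continuous f.
Proof.
move=> fc x A /nbhs_ballP[e e0 eA].
have : \forall y \near x, forall ij : 'I_m * 'I_n,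
    ball (f x ij.1 ij.2) e (f y ij.1 ij.2).
  by apply: filter_forall => ij; apply: (fc ij.1 ij.2 x); exact: nbhsx_ballx.
by apply: filterS => y fy; apply: eA; split => // i j; exact: (fy (i, j)).
Qed.

Lemma continuous_trmx m n : continuous (@trmx K m n).
Proof.
by apply: continuous_mx => i j; under eq_fun do rewrite mxE; exact: coord_continuous.
Qed.

Lemma continuous_mulmx m n p (M : 'M[K]_(m, n)) : continuous (@mulmx K m n p M).
Proof.
apply: continuous_mx => i j; under eq_fun do rewrite mxE.
apply: (continuous_big add_continuous) => k _ x.
by apply: continuousM; [exact: cst_continuous | exact: coord_continuous].
Qed.

End matrix_topology.

Lemma cV_compact (R : realType) n (A : 'I_n -> set R) :
  (forall i, compact (A i)) -> compact [set v : 'cV[R]_n | forall i, A i (v i 0)].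
Proof.
move=> Acompact.
have -> : [set v : 'cV[R]_n | forall i, A i (v i 0)] =
          trmx @` [set v : 'rV[R]_n | forall i, A i (v 0 i)].
  apply/seteqP; split => v Av; last by case: Av => w Aw <- i; rewrite mxE.
  by exists v^T; [move=> i; rewrite mxE | rewrite trmxK].
apply: continuous_compact; last exact: rV_compact.
exact/continuous_subspaceT/continuous_trmx.
Qed.

Section corner_simplex.
Variables (R : realType) (n : nat).
Implicit Types (a b : 'cV[R]_n) (k : 'I_n).

Definition corner_simplex : set 'cV[R]_n :=
  [set a | (forall k, 0 <= a k 0) /\ \sum_k a k 0 <= 1].

Definition corner_simplex_vertices : set 'cV[R]_n :=
  [set 0] `|` [set a | exists k, a = delta_mx k 0].

Lemma corner_simplex_le1 a k : corner_simplex a -> a k 0 <= 1.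
Proof.
by move=> [a0 a1]; apply: le_trans a1; rewrite (bigD1 k) //= lerDl sumr_ge0.
Qed.

Lemma sum_kronecker k : \sum_i ((i == k)%:R : R) = 1.
Proof. by rewrite (bigD1 k) //= eqxx big1 ?addr0 // => i /negbTE ->. Qed.

Lemma corner_simplex_delta_mx a k :
  corner_simplex a -> a k 0 = 1 -> a = delta_mx k 0.
Proof.
move=> [a0 a1] ak1.
have rest0 : \sum_(i | i != k) a i 0 = 0.
  apply/le_anti; rewrite sumr_ge0 // andbT.
  by move: a1; rewrite (bigD1 k) //= ak1 -lerBrDl subrr.
apply/colP => i; rewrite mxE eqxx andbT.
by have [->|ik] := eqVneq i k; [rewrite ak1 | rewrite (psumr_eq0P _ rest0)].
Qed.

Lemma corner_simplex_vertices_sub : corner_simplex_vertices `<=` corner_simplex.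
Proof.
move=> _ [->|[k ->]]; split.
- by move=> k; rewrite mxE.
- by rewrite big1 // => k _; rewrite mxE.
- by move=> i; rewrite mxE ler0n.
- by under eq_bigr do rewrite mxE eqxx andbT; rewrite sum_kronecker.
Qed.

Lemma convex_corner_simplex :
  convex_set (corner_simplex : set (convex_lmodType 'cV[R]_n)).
Proof.
move=> a b l /set_mem[a0 a1] /set_mem[b0 b1]; apply/mem_set.
have l0 : 0 <= l%:num := ge0 l.
have l1 : 0 <= 1 - l%:num by rewrite subr_ge0 le1.
split => [k|]; first by rewrite !mxE addr_ge0 // mulr_ge0.
under eq_bigr do rewrite !mxE.
rewrite big_split /= -!mulr_sumr.
by rewrite -[1](subrK l%:num) addrC lerD // ler_piMr.
Qed.

Lemma closed_corner_simplex : closed corner_simplex.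
Proof.
have -> : corner_simplex =
    \bigcap_k ((fun a : 'cV[R]_n => a k 0) @^-1` [set x | 0 <= x]) `&`
    (fun a : 'cV[R]_n => \sum_k a k 0) @^-1` [set x | x <= 1].
  by apply/seteqP; split => a [a0 a1]; split => // k; [move=> _ |]; exact: a0.
apply: closedI; first apply: closed_bigI => k _.
  by apply: (proj1 (continuous_closedP _)); [exact: coord_continuous | exact: closed_ge].
apply: (proj1 (continuous_closedP _)); last exact: closed_le.
by apply: (continuous_big add_continuous) => k _; exact: coord_continuous.
Qed.

Lemma compact_corner_simplex : compact corner_simplex.
Proof.
apply: (subclosed_compact closed_corner_simplex
          (cV_compact (fun=> @segment_compact R 0 1))).
by move=> a Sa i /=; rewrite in_itv /= (Sa.1 i) corner_simplex_le1.
Qed.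

Lemma extreme_point_corner_simplex0 : extreme_point corner_simplex 0.
Proof.
split; first by apply: corner_simplex_vertices_sub; left.
move=> a b t [a0 _] [b0 _] t0 t1 /colP abE.
suff coord0 i : a i 0 = 0 /\ b i 0 = 0.
  by apply/colP => i; rewrite (coord0 i).1 (coord0 i).2.
have := abE i; rewrite !mxE => E.
have := a0 i; have := b0 i; split; nra.
Qed.

Lemma extreme_point_corner_simplex_delta k :
  extreme_point corner_simplex (delta_mx k 0).
Proof.
split; first by apply: corner_simplex_vertices_sub; right; exists k.
move=> a b t Sa Sb t0 t1 /colP/(_ k); rewrite !mxE !eqxx mulr1n => E.
have := corner_simplex_le1 k Sa; have := corner_simplex_le1 k Sb => b1 a1.
have ak1 : a k 0 = 1 by nra.
have bk1 : b k 0 = 1 by nra.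
by rewrite (corner_simplex_delta_mx Sa ak1) (corner_simplex_delta_mx Sb bk1).
Qed.

(* [a] is a proper convex combination of [e_k] and of
   [(a - a_k e_k) / (1 - a_k)], whose k-th coordinate is 0. *)
Lemma not_extreme_point_corner_simplex a k :
  corner_simplex a -> 0 < a k 0 < 1 -> ~ extreme_point corner_simplex a.
Proof.
move=> [a0 a1] /andP[ak0 ak1] [_ ext].
set c := a k 0 in ak0 ak1.
have c1 : 1 - c != 0 by rewrite subr_eq0 eq_sym lt_eqF.
pose b := (1 - c)^-1 *: (a - c *: delta_mx k 0).
have bk0 : b k 0 = 0 by rewrite !mxE eqxx mulr1 subrr mulr0.
have Sb : corner_simplex b.
  split => [i|].
    rewrite !mxE eqxx andbT.
    have [->|ik] := eqVneq i k; first by rewrite mulr1 subrr mulr0.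
    by rewrite mulr0 subr0 mulr_ge0 // invr_ge0 subr_ge0 ltW.
  under eq_bigr do rewrite !mxE eqxx andbT.
  rewrite -mulr_sumr sumrB -mulr_sumr sum_kronecker mulr1.
  by rewrite ler_pdivrMl ?subr_gt0 // mulr1 lerD2r.
have Se : corner_simplex (delta_mx k 0).
  by apply: corner_simplex_vertices_sub; right; exists k.
have aE : a = c *: delta_mx k 0 + (1 - c) *: b.
  by rewrite /b scalerA mulfV // scale1r addrC subrK.
have := ext _ _ _ Se Sb ak0 ak1 aE.
by move/colP/(_ k); rewrite bk0 mxE !eqxx; apply/eqP; rewrite oner_eq0.
Qed.

Lemma extreme_point_corner_simplex :
  extreme_point corner_simplex = corner_simplex_vertices.
Proof.
apply/seteqP; split => [a [Sa ext] | _ [->|[k ->]]]; last first.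
- exact: extreme_point_corner_simplex_delta.
- exact: extreme_point_corner_simplex0.
have [->|a0] := eqVneq a 0; [by left | right].
have [k ak0] : exists k, a k 0 != 0.
  apply/existsP; apply: contraNT a0 => /existsPn a0.
  by apply/eqP/colP => k; rewrite mxE; apply/eqP/negbNE.
have [ak1|ak1] := eqVneq (a k 0) 1; first by exists k; exact: corner_simplex_delta_mx.
exfalso; apply: (not_extreme_point_corner_simplex (k := k) Sa _ (conj Sa ext)).
by rewrite lt0r ak0 Sa.1 lt_neqAle ak1 corner_simplex_le1.
Qed.

Lemma conv_hull_sub_corner_simplex (S : set 'cV[R]_n) :
  S `<=` corner_simplex -> conv_hull S `<=` corner_simplex.
Proof.
move=> Ssub _ [m [w [p [w0 [w1 [Sp ->]]]]]].
have p0 i := (Ssub _ (Sp i)).1.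
have p1 i := (Ssub _ (Sp i)).2.
split => [k|].
  by rewrite summxE sumr_ge0 // => i _; rewrite mxE mulr_ge0.
under eq_bigr do rewrite summxE.
rewrite exchange_big /= -w1 ler_sum // => i _.
under eq_bigr do rewrite mxE.
by rewrite -mulr_sumr ler_piMr.
Qed.

(* The weight of the vertex 0 is the slack 1 - sum_k a_k. *)
Lemma corner_simplex_conv_hull : corner_simplex = conv_hull corner_simplex_vertices.
Proof.
apply/seteqP; split; last first.
  exact/conv_hull_sub_corner_simplex/corner_simplex_vertices_sub.
move=> a [a0 a1].
pose w (i : 'I_n.+1) := if unlift ord0 i is Some k then a k 0 else 1 - \sum_k a k 0.
pose p (i : 'I_n.+1) : 'cV[R]_n := if unlift ord0 i is Some k then delta_mx k 0 else 0.
exists n.+1, w, p; split.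
  by move=> i; rewrite /w; case: unlift; rewrite ?subr_ge0.
split.
  rewrite big_ord_recl /w unlift_none [X in _ + X](eq_bigr (fun k => a k 0)).
    by rewrite subrK.
  by move=> k _; rewrite liftK.
split; first by move=> i; rewrite /p; case: unlift => [k|]; [right; exists k | left].
rewrite big_ord_recl /p unlift_none scaler0 add0r.
under eq_bigr do rewrite /w liftK.
apply/colP => i; rewrite summxE (bigD1 i) //= big1 ?addr0.
  by rewrite !mxE !eqxx mulr1.
by move=> k /negbTE ki; rewrite !mxE eq_sym ki mulr0.
Qed.

End corner_simplex.

Section graph_fourier.
Variables (R : realType) (n : nat) (U : 'M[R]_n).
Hypothesis U_orth : U^T *m U = 1%:M.

Lemma KmxE f : Kmx U f = U *m diag_mx (gft U f)^T *m U^T.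
Proof.
apply/matrixP => i j; rewrite mxE /convop /gft /ebasis -colE -!mulmxA !mxE.
by apply: eq_bigr => k _; rewrite !mul_diag_mx !mxE [_ * U j k]mulrC.
Qed.

Lemma gft_mulmx a : gft U (U *m a) = a.
Proof. by rewrite /gft mulmxA U_orth mul1mx. Qed.

Lemma mulmx_gft f : U *m gft U f = f.
Proof. by rewrite /gft mulmxA mulmx1C // mul1mx. Qed.

Lemma quad_form_diag_mx (d : 'rV[R]_n) (w : 'cV[R]_n) :
  (w^T *m diag_mx d *m w) 0 0 = \sum_k d 0 k * w k 0 ^+ 2.
Proof.
rewrite mul_mx_diag mxE; apply: eq_bigr => k _.
by rewrite !mxE [w k 0 * _]mulrC -mulrA expr2.
Qed.

Lemma psd_mx_conj_diag (d : 'rV[R]_n) :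
  psd_mx (U *m diag_mx d *m U^T) <-> forall k, 0 <= d 0 k.
Proof.
have quadE v : v^T *m (U *m diag_mx d *m U^T) *m v =
               (U^T *m v)^T *m diag_mx d *m (U^T *m v).
  by rewrite trmx_mul trmxK !mulmxA.
split => [[_ psd] k | d0].
  have := psd (col k U).
  rewrite quadE -/(gft U _) colE gft_mulmx quad_form_diag_mx.
  rewrite (bigD1 k) //= big1 ?addr0 => [|i /negbTE ik]; rewrite mxE ?ik.
    by rewrite !eqxx expr1n mulr1.
  by rewrite expr0n mulr0.
split; first by rewrite !trmx_mul trmxK tr_diag_mx mulmxA.
move=> v; rewrite quadE quad_form_diag_mx sumr_ge0 // => k _.
by rewrite mulr_ge0 ?sqr_ge0.
Qed.

Lemma psd_funsE f : psd_funs U f <-> forall k, 0 <= gft U f k 0.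
Proof.
rewrite /psd_funs /= KmxE psd_mx_conj_diag.
by split => f0 k; have := f0 k; rewrite [_^T _ _]mxE.
Qed.

Lemma psd_funs1E : psd_funs1 U = mulmx U @` @corner_simplex R n.
Proof.
apply/seteqP; split => [f [/psd_funsE f0 f1] | _ [a [a0 a1] <-]].
  exists (gft U f); last exact: mulmx_gft.
  by split => //; under eq_bigr do rewrite -[gft _ _ _ _]ger0_norm //.
split; first by apply/psd_funsE; rewrite gft_mulmx.
by rewrite gft_mulmx; under eq_bigr do rewrite ger0_norm //.
Qed.

Lemma mulmx_corner_simplex_vertices :
  mulmx U @` @corner_simplex_vertices R n =
  [set 0] `|` [set x | exists k, x = col k U].
Proof.
apply/seteqP; split => [_ [_ [->|[k ->]] <-] | _ [->|[k ->]]].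
- by left; rewrite mulmx0.
- by right; exists k; rewrite colE.
- by exists 0; [left | rewrite mulmx0].
- by exists (delta_mx k 0); [right; exists k | rewrite colE].
Qed.

End graph_fourier.

Theorem theorem2 (R : realType) (n : nat) (A : 'M[R]_n) (U : 'M[R]_n)
    (lam : 'I_n -> R)
    (hAsym : A^T = A)
    (hAnn : forall i j, 0 <= A i j)
    (hdeg : forall i, 0 < \sum_k A i k)
    (hUorth : U^T *m U = 1%:M)
    (hLeig : normLap A = U *m diag_mx (\row_k lam k) *m U^T) :
  convex_set (psd_funs1 U : set (convex_lmodType 'cV[R]_n)) /\
  compact (psd_funs1 U : set 'M[R^o]_(n, 1)) /\
  (forall x : 'cV[R]_n,
     extreme_point (psd_funs1 U) x <-> (x = 0 \/ exists k : 'I_n, x = col k U)) /\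
  psd_funs1 U = conv_hull ([set 0] `|` [set x | exists k : 'I_n, x = col k U]).
Proof.
have U_inj : injective (mulmx U) := can_inj (gft_mulmx hUorth).
rewrite psd_funs1E // -mulmx_corner_simplex_vertices.
split; first exact/convex_set_image/convex_corner_simplex.
split.
  apply: continuous_compact; last exact: compact_corner_simplex.
  exact/continuous_subspaceT/continuous_mulmx.
split.
  move=> x; rewrite extreme_point_image // extreme_point_corner_simplex.
  by rewrite mulmx_corner_simplex_vertices.
by rewrite conv_hull_image -corner_simplex_conv_hull.
Qed.
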